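(* Let $X$ be a prelength space and $Y$ a metric space. For any $f\in\mathfrak{C}(X\to Y)$ and $x\in\mathfrak{C}(X)$, the function $\mathrm{ap}(f)(x)=\lambda\varepsilon.\,\mathrm{map}(f(\tfrac{\varepsilon}{2}))(x)(\tfrac{\varepsilon}{2})$ is a regular function over $Y$.
   Context: $\mathbb{Q}^+$ denotes the strictly positive rationals; all $\varepsilon,\delta$ (with indices) range over $\mathbb{Q}^+$. A metric space is a triple $(X,\asymp,B)$ where $\asymp$ is an equivalence relation on $X$ and $B$ assigns to each $\varepsilon\in\mathbb{Q}^+$ a binary relation $B_\varepsilon$ on $X$ respecting $\asymp$, such that: (1) each $B_\varepsilon$ is reflexive; (2) each $B_\varepsilon$ is symmetric; (3) if $B_{\varepsilon_1}(a,b)$ and $B_{\varepsilon_2}(b,c)$ then $B_{\varepsilon_1+\varepsilon_2}(a,c)$; (4) if $B_{\varepsilon+\delta}(a,b)$ for all $\delta$, then $B_\varepsilon(a,b)$; (5) if $B_\varepsilon(a,b)$ for all $\varepsilon$, then $a\asymp b$. A prelength space is a metric space such that for all $a,b,\varepsilon,\delta_1,\delta_2$ with $\varepsilon<\delta_1+\delta_2$ and $B_\varepsilon(a,b)$ there exists $c$ with $B_{\delta_1}(a,c)$ and $B_{\delta_2}(c,b)$. A regular function over a metric space $W$ is a function $x:\mathbb{Q}^+\to W$ such that $B_{\varepsilon_1+\varepsilon_2}(x(\varepsilon_1),x(\varepsilon_2))$ for all $\varepsilon_1,\varepsilon_2$; $\mathfrak{C}(W)$ is the metric space of regular functions with $x\asymp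 y$ iff $B_{2\varepsilon}(x(\varepsilon),y(\varepsilon))$ for all $\varepsilon$ and $B'_\varepsilon(x,y)$ iff $B_{\varepsilon+\delta_1+\delta_2}(x(\delta_1),y(\delta_2))$ for all $\delta_1,\delta_2$. A uniformly continuous function $g:X\to Y$ is a pair of a function and a modulus $\mu_g$ with $B^X_{\mu_g(\varepsilon)}(x_1,x_2)\Rightarrow B^Y_\varepsilon(g(x_1),g(x_2))$. $X\to Y$ is the metric space of uniformly continuous functions with $B_\varepsilon(g,h)$ iff $B^Y_\varepsilon(g(a),h(a))$ for all $a$, and $g\asymp h$ iff $g(a)\asymp h(a)$ for all $a$. $\mathrm{map}(g)(x)=\lambda\varepsilon.\,g(x(\mu_g(\varepsilon)))$. *)

From mathcomp Require Import all_boot all_order all_algebra.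
Set Implicit Arguments. Unset Strict Implicit. Unset Printing Implicit Defensive.
Import Order.TTheory GRing.Theory Num.Theory.
Local Open Scope ring_scope.

Definition Qpos := {q : rat | 0 < q}.

Definition qpadd (a b : Qpos) : Qpos :=
  exist _ (sval a + sval b) (addr_gt0 (proj2_sig a) (proj2_sig b)).

Lemma qphalf_gt0 (a : Qpos) : 0 < sval a / 2.
Proof. by rewrite divr_gt0 // (proj2_sig a). Qed.

Definition qphalf (a : Qpos) : Qpos := exist _ (sval a / 2) (qphalf_gt0 a).

Record MetricSpace := {
  ms_car :> Type;
  ms_eq : ms_car -> ms_car -> Prop;
  ms_ball : Qpos -> ms_car -> ms_car -> Prop;
  ms_eq_refl : forall a, ms_eq a a;
  ms_eq_sym : forall a b, ms_eq a b -> ms_eq b a;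
  ms_eq_trans : forall a b c, ms_eq a b -> ms_eq b c -> ms_eq a c;
  ms_ball_resp : forall e a a' b b', ms_eq a a' -> ms_eq b b' ->
      ms_ball e a b -> ms_ball e a' b';
  ms_ball_refl : forall e a, ms_ball e a a;
  ms_ball_sym : forall e a b, ms_ball e a b -> ms_ball e b a;
  ms_ball_triangle : forall e1 e2 a b c,
      ms_ball e1 a b -> ms_ball e2 b c -> ms_ball (qpadd e1 e2) a c;
  ms_ball_closed : forall e a b,
      (forall d, ms_ball (qpadd e d) a b) -> ms_ball e a b;
  ms_ball_eq : forall a b, (forall e, ms_ball e a b) -> ms_eq a b
}.

Arguments ms_eq {m}.
Arguments ms_ball {m}.

Definition prelength (X : MetricSpace) : Prop :=
  forall (a b : X) (e d1 d2 : Qpos), sval e < sval d1 + sval d2 ->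
    ms_ball e a b -> exists c : X, ms_ball d1 a c /\ ms_ball d2 c b.

Definition is_regular_for (T : Type) (ball : Qpos -> T -> T -> Prop)
  (x : Qpos -> T) : Prop :=
  forall e1 e2 : Qpos, ball (qpadd e1 e2) (x e1) (x e2).

Definition is_regular (W : MetricSpace) (x : Qpos -> W) : Prop :=
  is_regular_for (@ms_ball W) x.

Record UCFun (X Y : MetricSpace) := {
  ucf :> X -> Y;
  uc_mod : Qpos -> Qpos;
  uc_modP : forall (e : Qpos) (a b : X),
      ms_ball (uc_mod e) a b -> ms_ball e (ucf a) (ucf b)
}.

Definition uc_ball (X Y : MetricSpace) (e : Qpos) (g h : UCFun X Y) : Prop :=
  forall a : X, ms_ball e (g a) (h a).

Definition is_regular_uc (X Y : MetricSpace) (f : Qpos -> UCFun X Y) : Prop :=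
  is_regular_for (@uc_ball X Y) f.

Definition uc_map (X Y : MetricSpace) (g : UCFun X Y) (x : Qpos -> X) : Qpos -> Y :=
  fun e => g (x (uc_mod g e)).

Definition ap (X Y : MetricSpace) (f : Qpos -> UCFun X Y) (x : Qpos -> X) : Qpos -> Y :=
  fun e => uc_map (f (qphalf e)) x (qphalf e).

(** Write [g_i = f (e_i/2)] and [m_i] for the modulus of [g_i] at [e_i/2].
    Regularity of [x] puts [x m1] and [x m2] within [m1 + m2]; in a prelength
    space this ball splits into pieces of radii [m1], [mu] and [m2] through
    points [c1], [c2], where [mu] is the modulus of [g2] at an arbitrary [d].
    The chain [g1 (x m1)], [g1 c1], [g2 c1], [g2 c2], [g2 (x m2)] then has
    length [e1/2 + (e1/2 + e2/2) + d + e2/2], and closedness of balls removes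
    [d]. *)

From mathcomp Require Import all_boot all_order all_algebra.
From mathcomp Require Import lra.
Import Order.TTheory GRing.Theory Num.Theory.
Local Open Scope ring_scope.

Lemma eq_ms_ball (M : MetricSpace) (e e' : Qpos) (a b : M) :
  sval e = sval e' -> ms_ball e a b -> ms_ball e' a b.
Proof.
case: e => q q_gt0; case: e' => q' q'_gt0 /= eq_qq'; subst q'.
by rewrite (eq_irrelevance q_gt0 q'_gt0).
Qed.

Lemma prelength_ball_split3 {X : MetricSpace} (HX : prelength X)
    {a b : X} {e1 e2 : Qpos} (d : Qpos) :
  ms_ball (qpadd e1 e2) a b ->
  exists c1 c2 : X, [/\ ms_ball e1 a c1, ms_ball d c1 c2 & ms_ball e2 c2 b].
Proof.
move=> ab.
have d_gt0 : 0 < sval d := proj2_sig d.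
(* [prelength] needs a strict inequality, so the first split leaves [d/2]. *)
have [c1 [ac1 c1b]] :=
  HX a b (qpadd e1 e2) e1 (qpadd (qphalf d) e2) ltac:(rewrite /=; lra) ab.
have [c2 [c1c2 c2b]] :=
  HX c1 b (qpadd (qphalf d) e2) d e2 ltac:(rewrite /=; lra) c1b.
by exists c1, c2.
Qed.

Theorem theorem25 (X Y : MetricSpace) (HX : prelength X)
  (f : Qpos -> UCFun X Y) (x : Qpos -> X) :
  is_regular_uc f -> is_regular x -> is_regular (ap f x).
Proof.
move=> f_reg x_reg e1 e2; rewrite /ap /uc_map.
set g1 := f (qphalf e1); set g2 := f (qphalf e2).
apply: ms_ball_closed => d.
have [c1 [c2 [xc1 c1c2 c2x]]] := prelength_ball_split3 HX (uc_mod g2 d)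
  (x_reg (uc_mod g1 (qphalf e1)) (uc_mod g2 (qphalf e2))).
have g1x_g1c1 := uc_modP xc1.
have g1c1_g2c1 : ms_ball _ (g1 c1) (g2 c1) := f_reg (qphalf e1) (qphalf e2) c1.
have g2c1_g2c2 := uc_modP c1c2.
have g2c2_g2x := uc_modP c2x.
apply: eq_ms_ball (ms_ball_triangle (ms_ball_triangle
  (ms_ball_triangle g1x_g1c1 g1c1_g2c1) g2c1_g2c2) g2c2_g2x).
rewrite /=; lra.
Qed.
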